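(* Let $P$ be a convex polytope in $\mathbb{R}^D$ with vertices in $\mathbb{Z}^D$. Let $r>0$, and fix a set $F_r \subset B_r(nP)$. Let $A$ be chosen uniformly at random from all subsets $S\subset L(nP)$ such that $S\cap B_r(nP) = F_r$, and let $\mathbf{k}\in M_r(nP+nP)$. Then, for some constant $c > 0$ independent of $n$, $$\mathbb{P}[\mathbf{k} \notin A+A]\ \le\ c \left( \tfrac34 \right)^{ \left| L (nP \cap (\mathbf{k} - nP)) \right|/2}.$$
   Context: For $S \subset \mathbb{R}^D$, $L(S) = S\cap \mathbb{Z}^D$, and $nS$ is the dilation of $S$ by $n$ about the origin; $\mathbf{k}-nP = \{\mathbf{k}-\mathbf{x}:\mathbf{x}\in nP\}$. For a convex polytope $Q$ and $r>0$, $B_r(Q) = \{\mathbf{q}\in L(Q) : d(\mathbf{q},\mathbf{v})\le r \text{ for some vertex } \mathbf{v} \text{ of } Q\}$, with $d$ the Euclidean metric, and $M_r(Q) = L(Q)\setminus B_r(Q)$. For a set $A$, $A+A=\{a_1+a_2: a_1,a_2\in A\}$. *)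

From HB Require Import structures.
From mathcomp Require Import all_boot all_order all_algebra.
From mathcomp Require Import finmap.
From mathcomp Require Import boolp classical_sets reals exp.
Set Implicit Arguments. Unset Strict Implicit. Unset Printing Implicit Defensive.
Import Order.TTheory GRing.Theory Num.Theory.
Local Open Scope ring_scope.
Local Open Scope classical_set_scope.

Section Defs.
Variables (R : realType) (D : nat).
Notation vec := 'rV[R]_D.

Definition zr (z : 'rV[int]_D) : vec := map_mx (fun a : int => a%:~R) z.

Definition conv (m : nat) (V : 'I_m -> vec) : set vec :=
  [set x | exists lam : 'I_m -> R, (forall i, 0 <= lam i) /\
     \sum_i lam i = 1 /\ x = \sum_i lam i *: V i].

Definition is_vertex (Q : set vec) (v : vec) : Prop :=
  Q v /\ forall x y (t : R), Q x -> Q y -> 0 < t < 1 ->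
    v = t *: x + (1 - t) *: y -> x = y.

Definition dil (n : nat) (S : set vec) : set vec := [set n%:R *: x | x in S].

Definition msum (S T : set vec) : set vec :=
  [set z | exists x y, S x /\ T y /\ z = x + y].

Definition refl (k : vec) (S : set vec) : set vec := [set k - x | x in S].

Definition dist (x y : vec) : R := Num.sqrt (\sum_i (x ord0 i - y ord0 i) ^+ 2).

Definition near_vertex (r : R) (Q : set vec) (q : vec) : Prop :=
  exists v, is_vertex Q v /\ dist q v <= r.

(* M_r(Q) membership for an integer point k:  k in L(Q) \ B_r(Q) *)
Definition in_M (r : R) (Q : set vec) (k : 'rV[int]_D) : Prop :=
  Q (zr k) /\ ~ near_vertex r Q (zr k).

(* B_r(Q) as a finite set, given the finite set LQ = L(Q) *)
Definition Bset (r : R) (Q : set vec) (LQ : {fset 'rV[int]_D}) : {fset 'rV[int]_D} :=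
  [fset z in LQ | `[< near_vertex r Q (zr z) >]]%fset.

Definition in_sumset (S : {fset 'rV[int]_D}) (k : 'rV[int]_D) : bool :=
  [exists a : S, exists b : S, (val a + val b == k)%R].

End Defs.

Arguments zr {R D} z.
Arguments conv {R D m} V.
Arguments is_vertex {R D} Q v.
Arguments dil {R D} n S.
Arguments msum {R D} S T.
Arguments refl {R D} k S.
Arguments dist {R D} x y.
Arguments near_vertex {R D} r Q q.
Arguments in_M {R D} r Q k.
Arguments Bset {R D} r Q LQ.
Arguments in_sumset {D} S k.

(* The points z of L(nP) with k - z in L(nP) come in pairs {z, k - z}. Outside B_r(nP)
   the points belong to A independently with probability 1/2, and k lies in A + A as soon
   as both points of one pair do; the pairs avoiding B_r(nP) are disjoint, so
   P[k \notin A + A] <= (3/4)^h with h their number. Every point of B_r(nP) is an integer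
   point within distance r of some n V_i, so |B_r(nP)| <= K with K independent of n; hence
   2h >= |L(nP \cap (k - nP))| - 2K - 2 and c = (4/3)^(K+1) works. *)

From HB Require Import structures.
From mathcomp Require Import all_boot all_order all_algebra.
From mathcomp Require Import finmap.
From mathcomp Require Import boolp classical_sets reals exp.
From mathcomp Require Import zify ring lra.
Import Order.TTheory GRing.Theory Num.Theory.
Local Open Scope ring_scope.

Section PairAvoidance.
Context {T : finType}.

Definition avoid_pairs (s : T -> T) (H : {set T}) : {set {ffun T -> bool}} :=
  [set g : {ffun T -> bool} | [forall h in H, ~~ (g h && g (s h))]].

Definition raise2 (a b : T) (g : {ffun T -> bool}) : {ffun T -> bool} :=
  [ffun x => [|| x == a, x == b | g x]].

Section RaiseClosed.
Variables (a b : T) (C : {set {ffun T -> bool}}).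
Hypothesis raise2C : {in C, forall g, raise2 a b g \in C}.

Lemma card_le_raise2 (E : {set {ffun T -> bool}}) (x y : bool) :
  (forall g, g \in E -> [&& g \in C, g a == x & g b == y]) ->
  (#|E| <= #|[set g in C | g a && g b]|)%N.
Proof.
move=> EC; have raise2_inj : {in E &, injective (raise2 a b)}.
  move=> g g' /EC/and3P[_ /eqP ga /eqP gb] /EC/and3P[_ /eqP g'a /eqP g'b] /ffunP eqg.
  have [ea eb] : g a = g' a /\ g b = g' b by rewrite ga gb g'a g'b.
  apply/ffunP => z; have := eqg z; rewrite !ffunE.
  by case: (eqVneq z a) => [->|_] //; case: (eqVneq z b) => [->|].
rewrite -(card_in_imset raise2_inj); apply/subset_leq_card/fintype.subsetP.
move=> _ /imsetP[g /EC/and3P[gC _ _] ->].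
by rewrite inE raise2C // !ffunE !eqxx orbT.
Qed.

Lemma card_nand_le : (4 * #|[set g in C | ~~ (g a && g b)]| <= 3 * #|C|)%N.
Proof.
pose X := [set g : {ffun T -> bool} | g a]; pose Y := [set g : {ffun T -> bool} | g b].
have split4 (A : {set {ffun T -> bool}}) : #|A| = (#|A :&: X :&: Y| + #|(A :&: X) :\: Y|
                                       + #|(A :\: X) :&: Y| + #|(A :\: X) :\: Y|)%N.
  by rewrite -(cardsID X A) -(cardsID Y (A :&: X)) -(cardsID Y (A :\: X)) !addnA.
pose N := [set g in C | ~~ (g a && g b)].
have -> : #|N| = (#|(C :&: X) :\: Y| + #|(C :\: X) :&: Y| + #|(C :\: X) :\: Y|)%N.
  rewrite split4 (@eq_card0 _ (N :&: X :&: Y)) => [|g]; last first.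
    by rewrite !inE; case: (g a); case: (g b); rewrite ?andbF.
  by congr (_ + _ + _)%N; apply: eq_card => g; rewrite !inE;
     case: (g a); case: (g b); rewrite ?andbF ?andbT.
rewrite (split4 C).
have -> : #|C :&: X :&: Y| = #|[set g in C | g a && g b]|.
  by apply: eq_card => g; rewrite !inE andbA.
have [c10 c01 c00] :
    [/\ (#|(C :&: X) :\: Y| <= #|[set g in C | g a && g b]|)%N,
        (#|(C :\: X) :&: Y| <= #|[set g in C | g a && g b]|)%N &
        (#|(C :\: X) :\: Y| <= #|[set g in C | g a && g b]|)%N].
  by split; [apply: (card_le_raise2 _ true false) | apply: (card_le_raise2 _ false true)
            | apply: (card_le_raise2 _ false false)] => g;
     rewrite !inE; case: (g a); case: (g b); rewrite ?andbF ?andbT.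
lia.
Qed.

End RaiseClosed.

Lemma avoid_pairsD1 (s : T -> T) (H : {set T}) a : a \in H ->
  avoid_pairs s H = [set g in avoid_pairs s (H :\ a) | ~~ (g a && g (s a))].
Proof.
move=> aH; apply/setP => g; rewrite !inE; apply/forallP/andP => [gH|[/forallP gH' gna] h].
  split; last by have := gH a; rewrite aH.
  by apply/forallP => h; apply/implyP; rewrite !inE => /andP[_ hH]; have := gH h; rewrite hH.
apply/implyP => hH; case: (eqVneq h a) => [-> //|ha].
by have := gH' h; rewrite !inE ha hH.
Qed.

Lemma avoid_pairs_raise2 (s : T -> T) (H : {set T}) a b :
  {in H, forall h, [&& h != a, h != b, s h != a & s h != b]} ->
  {in avoid_pairs s H, forall g, raise2 a b g \in avoid_pairs s H}.
Proof.
move=> Hab g; rewrite !inE => /forallP gH; apply/forallP => h; apply/implyP => hH.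
have := gH h; rewrite hH !ffunE.
by case/and4P: (Hab h hH) => /negbTE-> /negbTE-> /negbTE-> /negbTE->.
Qed.

Lemma card_avoid_pairs (s : T -> T) (H : {set T}) :
  {in H, forall h, s h \notin H} -> {in H &, injective s} ->
  (#|avoid_pairs s H| * 4 ^ #|H| <= 3 ^ #|H| * 2 ^ #|T|)%N.
Proof.
move Hn: #|H| => n; elim: n H Hn => [|n IH] H Hn sH injH.
  by rewrite !expn0 mul1n muln1 -card_bool -card_ffun max_card.
have [a aH] : exists a, a \in H by apply/set0Pn; rewrite -card_gt0 Hn.
have cardH' : #|H :\ a| = n by move: (cardsD1 a H); rewrite aH Hn add1n => -[].
have sH' : {in H :\ a, forall h, s h \notin H :\ a}.
  by move=> h /setD1P[_ hH]; rewrite inE negb_and sH ?orbT.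
have injH' : {in H :\ a &, injective s}.
  by move=> x y /setD1P[_ xH] /setD1P[_ yH]; apply: injH.
have raise2C : {in avoid_pairs s (H :\ a), forall g, raise2 a (s a) g \in
                                                     avoid_pairs s (H :\ a)}.
  apply: avoid_pairs_raise2 => h /setD1P[ha hH]; rewrite ha /=.
  apply/and3P; split.
  - by apply: contraNneq (sH a aH) => <-.
  - by apply: contraNneq (sH h hH) => ->.
  - by apply: contra_neq ha => /injH; apply.
have := @card_nand_le a (s a) _ raise2C; rewrite -avoid_pairsD1 // => key.
have := IH _ cardH' sH' injH'; rewrite !expnS; nia.
Qed.

End PairAvoidance.

Lemma cardfs_le1 {K : choiceType} (A : {fset K}) :
  {in A &, forall x y, x = y} -> (#|` A| <= 1)%N.
Proof.
case: (fset_0Vmem A) => [->|[x xA] A1]; first by rewrite cardfs0.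
rewrite -(cardfs1 x); apply/fsubset_leq_card/fsubsetP => y yA.
by rewrite inE (A1 y x yA xA).
Qed.

Lemma cardfsU_le {K : choiceType} (A B : {fset K}) : (#|` (A `|` B)%fset| <= #|` A| + #|` B|)%N.
Proof. by rewrite cardfsU leq_subr. Qed.

Lemma ratio_le_pow34 (R : realType) (b g h q K : nat) :
  (0 < g)%N -> (b * 4 ^ h <= 3 ^ h * g)%N -> (q <= 2 * (h + K.+1))%N ->
  (b%:R / g%:R : R) <= (4 / 3) ^+ K.+1 * powR (3 / 4) (q%:R / 2).
Proof.
move=> g0 bg qh; have gR : (0 : R) < g%:R by rewrite ltr0n.
have bgR : (b%:R / g%:R : R) <= (3 / 4) ^+ h.
  rewrite ler_pdivrMr // expr_div_n mulrAC ler_pdivlMr ?exprn_gt0 //.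
  by rewrite -!natrX -!natrM ler_nat.
apply: le_trans bgR _.
have -> : (3 / 4 : R) ^+ h = (4 / 3) ^+ K.+1 * (3 / 4) ^+ (h + K.+1).
  by rewrite exprD mulrCA -exprMn (_ : 4 / 3 * (3 / 4) = 1 :> R) ?expr1n ?mulr1 //; field.
rewrite ler_pM2l ?exprn_gt0 //; last lra.
rewrite -powR_mulrn; last lra.
apply: ger_powR; first by apply/andP; split; lra.
by rewrite ler_pdivrMr // -natrM ler_nat mulnC.
Qed.

Section Sumset.
Variable G : zmodType.

Definition trace_subsets (L B F : {fset G}) : {fset {fset G}} :=
  [fset S in fpowerset L | (S `&` B == F)%fset]%fset.

Definition sumset_missing (SS : {fset {fset G}}) (k : G) : {fset {fset G}} :=
  [fset S in SS | ~~ [exists a : S, exists b : S, (val a + val b == k)%R]]%fset.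

Variables (L B F : {fset G}) (k : G).
Hypotheses (BL : (B `<=` L)%fset) (FB : (F `<=` B)%fset).

Local Notation U := (L `\` B)%fset.

(* [pair_of u] is [k - u], or the junk value [u] when [k - u] falls outside U. *)
Let pair_of (u : U) : U := insubd u (k - val u).

(* One point out of each pair {u, k - u} of distinct points of U, chosen by enumeration order. *)
Let heads : {set U} :=
  [set u | (k - val u \in U) && (enum_rank u < enum_rank (pair_of u))%N].

Lemma val_pair_of u : k - val u \in U -> val (pair_of u) = k - val u.
Proof. exact: insubdK. Qed.

Lemma pair_ofK u : k - val u \in U -> pair_of (pair_of u) = u.
Proof. by move=> ku; apply: val_inj; rewrite !val_pair_of ?subKr //; apply: valP. Qed.

Lemma pair_of_heads : {in heads, forall h, pair_of h \notin heads}.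
Proof.
move=> h; rewrite inE => /andP[kh lt]; apply/negP; rewrite inE pair_ofK // => /andP[_].
by move=> /(ltn_trans lt); rewrite ltnn.
Qed.

Lemma pair_of_inj : {in heads &, injective pair_of}.
Proof.
move=> x y; rewrite inE => /andP[kx _]; rewrite inE => /andP[ky _] /(congr1 pair_of).
by rewrite !pair_ofK // => ->.
Qed.

Lemma card_sumset_missing_le :
  (#|` sumset_missing (trace_subsets L B F) k| <= #|avoid_pairs pair_of heads|)%N.
Proof.
pose phi (S : {fset G}) : {ffun U -> bool} := [ffun u => val u \in S].
have phi_inj : {in sumset_missing (trace_subsets L B F) k &, injective phi}.
  move=> S1 S2; rewrite !inE !fpowersetE.
  move=> /andP[/andP[SL1 /eqP SB1] _] /andP[/andP[SL2 /eqP SB2] _].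
  move=> /ffunP phiE; apply/fsetP => z.
  have [zB|zB] := boolP (z \in B).
    by have := congr1 (fun S => z \in S) (etrans SB1 (esym SB2)); rewrite !inE zB !andbT.
  have [zL|zL] := boolP (z \in L); last first.
    by apply/idP/idP => [/(fsubsetP SL1)|/(fsubsetP SL2)]; rewrite (negbTE zL).
  have zU : z \in U by rewrite inE zB zL.
  by have := phiE (FSetSub zU); rewrite !ffunE.
have /card_in_imfsetP/eqP <- := phi_inj.
rewrite -(card_finset (mem (avoid_pairs pair_of heads))).
apply/fsubset_leq_card/fsubsetP => _ /imfsetP[S /= SM ->].
rewrite !inE; apply/forallP => h; apply/implyP; rewrite inE => /andP[khU _].
rewrite !ffunE; move: SM; rewrite !inE => /andP[_]; apply: contra => /andP[hS phS].
apply/existsP; exists (FSetSub hS); apply/existsP; exists (FSetSub phS) => /=.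
by rewrite val_pair_of // subrKC.
Qed.

Lemma card_trace_subsets_ge : (2 ^ #|{: U}| <= #|` trace_subsets L B F|)%N.
Proof.
pose psi (g : {ffun U -> bool}) := (F `|` [fset val u | u in [set u : U | g u]])%fset.
have UB (u : U) : val u \notin B by have := valP u; rewrite inE => /andP[].
have psiE g (u : U) : (val u \in psi g) = g u.
  rewrite in_fsetU mem_imfset /=; last exact: val_inj.
  by rewrite inE; case: (boolP (val u \in F)) => // /(fsubsetP FB); rewrite (negbTE (UB u)).
have psi_inj : injective psi by move=> g1 g2 e; apply/ffunP => u; rewrite -!psiE e.
rewrite -card_bool -card_ffun -(card_finset (mem {: {ffun U -> bool}})).
have /card_in_imfsetP/eqP <- : {in [fset g in {: {ffun U -> bool}}]%fset &, injective psi}.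
  by move=> ? ? _ _; apply: psi_inj.
apply/fsubset_leq_card/fsubsetP => _ /imfsetP[g _ ->].
rewrite !inE fpowersetE; apply/andP; split.
  apply/fsubsetP => z; rewrite in_fsetU => /orP[/(fsubsetP FB)/(fsubsetP BL) //|].
  by case/imfsetP => u _ ->; have := valP u; rewrite inE => /andP[].
apply/eqP/fsetP => z; rewrite in_fsetI in_fsetU.
have [zF|zF] /= := boolP (z \in F); first by rewrite (fsubsetP FB).
by apply/negbTE/andP => -[/imfsetP[u _ ->]]; rewrite (negbTE (UB u)).
Qed.

Hypothesis no_2torsion : forall x : G, x + x = 0 -> x = 0.

Let half_cover : {fset G} :=
  ([fset val h | h in heads] `|` B `|` [fset z in L | (z + z == k)%R])%fset.

Lemma sym_points_cover :
  ([fset z in L | k - z \in L] `<=` half_cover `|` [fset k - z | z in half_cover])%fset.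
Proof.
have neg_cover z : k - z \in half_cover -> z \in [fset k - z | z in half_cover]%fset.
  by move=> kz; apply/imfsetP; exists (k - z); rewrite ?subKr.
apply/fsubsetP => z zQ; have /andP[zL kzL] : (z \in L) && (k - z \in L) by move: zQ; rewrite !inE.
rewrite in_fsetU.
have [zB|zB] := boolP (z \in B); first by rewrite !in_fsetU zB orbT.
have [kzB|kzB] := boolP (k - z \in B); first by rewrite neg_cover ?orbT // !in_fsetU kzB orbT.
have [zz|zz] := eqVneq z (k - z).
  have zFix : z \in [fset z in L | (z + z == k)%R]%fset.
    by rewrite !inE; apply/andP; split; rewrite // {2}zz subrKC.
  by rewrite !in_fsetU zFix !orbT.
have zU : z \in U by rewrite inE zB zL.
have kzU : k - z \in U by rewrite inE kzB kzL.
pose u : U := FSetSub zU.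
have upu : val (pair_of u) = k - z by rewrite val_pair_of.
have head_cover (h : U) : h \in heads -> val h \in half_cover.
  by move=> hH; rewrite !in_fsetU (mem_imfset _ _ val_inj) hH.
case: (ltngtP (enum_rank u) (enum_rank (pair_of u))) => [lt|gt|/ord_inj/enum_rank_inj uE].
- by rewrite (head_cover u) // inE kzU.
- rewrite neg_cover ?orbT // -upu head_cover // inE upu subKr zU pair_ofK //.
- by move: zz; rewrite -upu -uE eqxx.
Qed.

Lemma card_sym_points_le :
  (#|` [fset z in L | (k - z)%R \in L]%fset| <= 2 * (#|heads| + #|` B|.+1))%N.
Proof.
have fix1 : (#|` [fset z in L | (z + z == k)%R]%fset| <= 1)%N.
  apply: cardfs_le1 => x y; rewrite !inE => /andP[_ /eqP xk] /andP[_ /eqP yk].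
  apply/eqP; rewrite -subr_eq0; apply/eqP/no_2torsion.
  by rewrite addrACA -opprD xk yk subrr.
have heads_le : (#|` [fset val h | h in heads]%fset| <= #|heads|)%N.
  by apply: leq_trans (leq_imfset_card _ _ _) _; rewrite cardE.
have neg_le : (#|` [fset (k - z)%R | z in half_cover]%fset| <= #|` half_cover|)%N.
  exact: leq_imfset_card.
have base_le : (#|` half_cover| <= #|heads| + #|` B|.+1)%N.
  rewrite /half_cover; apply: leq_trans (cardfsU_le _ _) _; rewrite -addn1 addnA leq_add //.
  by apply: leq_trans (cardfsU_le _ _) _; rewrite leq_add.
apply: leq_trans (fsubset_leq_card sym_points_cover) _.
by apply: leq_trans (cardfsU_le _ _) _; rewrite mul2n -addnn leq_add // (leq_trans neg_le).
Qed.

Lemma sumset_missing_ratio (R : realType) (K : nat) : (#|` B| <= K)%N ->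
  (#|` sumset_missing (trace_subsets L B F) k|%:R / #|` trace_subsets L B F|%:R : R)
    <= (4 / 3) ^+ K.+1 * powR (3 / 4) (#|` [fset z in L | k - z \in L]%fset|%:R / 2).
Proof.
move=> BK; apply: (@ratio_le_pow34 _ _ _ #|heads|).
- by apply: leq_trans card_trace_subsets_ge; rewrite expn_gt0.
- apply: leq_trans (leq_mul card_sumset_missing_le (leqnn _)) _.
  apply: leq_trans (card_avoid_pairs _ _ pair_of_heads pair_of_inj) _.
  by rewrite leq_mul2l card_trace_subsets_ge orbT.
- by apply: leq_trans card_sym_points_le _; rewrite leq_mul2l leq_add2l ltnS BK orbT.
Qed.

End Sumset.

Section Polytope.
Context {R : realType} {D m : nat}.
Implicit Types (W : 'I_m -> 'rV[R]_D).

Lemma dil_conv n W : dil n (conv W) = conv (fun i => n%:R *: W i).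
Proof.
rewrite eqEsubset; split => x.
  case=> _ [lam [lam0 [lam1 ->]]] <-; exists lam; do 2!split => //.
  by rewrite scaler_sumr; apply: eq_bigr => i _; rewrite !scalerA mulrC.
case=> lam [lam0 [lam1 ->]]; exists (\sum_i lam i *: W i); first by exists lam.
by rewrite scaler_sumr; apply: eq_bigr => i _; rewrite !scalerA mulrC.
Qed.

Lemma conv_point W j : conv W (W j).
Proof.
exists (fun i => (i == j)%:R); split; [|split].
- by move=> i; rewrite ler0n.
- by rewrite (bigD1 j) //= eqxx big1 ?addr0 // => i /negbTE->.
- by rewrite (bigD1 j) //= eqxx scale1r big1 ?addr0 // => i /negbTE->; rewrite scale0r.
Qed.

Lemma conv_peel W {lam : 'I_m -> R} {j} :
  (forall i, 0 <= lam i) -> \sum_i lam i = 1 -> 0 < lam j ->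
  exists2 y, conv W y &
    \sum_i lam i *: W i = (lam j / 2) *: W j + (1 - lam j / 2) *: y.
Proof.
move=> lam0 lam1 lj; set t := lam j / 2.
have lj1 : lam j <= 1 by rewrite -lam1 (bigD1 j) //= lerDl sumr_ge0.
have t1 : 1 - t != 0 by rewrite subr_eq0 gt_eqF // /t; lra.
pose mu i := (lam i - (if i == j then t else 0)) / (1 - t).
exists (\sum_i mu i *: W i).
  exists mu; split; [|split] => //.
    move=> i; rewrite /mu divr_ge0 //; last by rewrite /t; lra.
    by case: eqP => [->|_]; rewrite ?subr0 // /t; lra.
  by rewrite -mulr_suml sumrB lam1 -big_mkcond big_pred1_eq divff.
rewrite scaler_sumr (bigD1 j) //= [in RHS](bigD1 j) //= addrA; congr (_ + _).
  by rewrite !scalerA /mu eqxx mulrCA divff // mulr1 -scalerDl addrC subrK.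
apply: eq_bigr => i /negbTE ij.
by rewrite !scalerA /mu ij subr0 mulrCA divff // mulr1.
Qed.

Lemma conv_vertex W v : is_vertex (conv W) v -> exists i, v = W i.
Proof.
case=> -[lam [lam0 [lam1 ->]]] vert.
have [j lj] : exists j, 0 < lam j.
  apply: contrapT => /forallNP lam_le0.
  have lam_eq0 i : lam i = 0 by apply/eqP; rewrite eq_le lam0 andbT leNgt; exact/negP.
  by move: lam1; rewrite big1 // => /eqP; rewrite eq_sym oner_eq0.
have [y yW ey] := conv_peel W lam0 lam1 lj.
have lj1 : lam j <= 1 by rewrite -lam1 (bigD1 j) //= lerDl sumr_ge0.
have t01 : 0 < lam j / 2 < 1 by apply/andP; split; lra.
exists j; rewrite ey -(vert _ _ _ (conv_point W j) yW t01 ey).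
by rewrite -scalerDl addrC subrK scale1r.
Qed.

Lemma dist_coord_le (x y : 'rV[R]_D) j : `|x ord0 j - y ord0 j| <= dist x y.
Proof.
rewrite /dist -sqrtr_sqr ler_sqrt; last by apply: sumr_ge0 => i _; apply: sqr_ge0.
by rewrite (bigD1 j) //= lerDl sumr_ge0 // => i _; apply: sqr_ge0.
Qed.

Lemma near_vertex_dil_conv r n W q :
  near_vertex r (dil n (conv W)) q -> exists i, dist q (n%:R *: W i) <= r.
Proof. by rewrite dil_conv => -[v [/conv_vertex[i ->] qv]]; exists i. Qed.

Lemma int_near_floor {a : int} {x r : R} : `|a%:~R - x| <= r ->
  - (Num.truncn r).+1%:Z < a - Num.floor x <= (Num.truncn r).+1%:Z.
Proof.
rewrite ler_norml => /andP[ax xa]; have rρ := truncnS_gt r.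
have /andP[flx xfl] := floor_itv x; rewrite rmorphD /= in xfl.
have lo : - (Num.truncn r).+1%:Z < a - Num.floor x.
  by rewrite -(ltr_int R) !rmorphB !rmorphN /=; lra.
have hi : a - Num.floor x < (Num.truncn r).+1%:Z + 1.
  by rewrite -(ltr_int R) !rmorphB !rmorphD /=; lra.
by rewrite lo -ltzD1.
Qed.

(* The offsets [o j] in [0, 2ρ] encode the integer box [floor w - ρ, floor w + ρ]. *)
Definition box_point (ρ : nat) (w : 'rV[R]_D) (o : {ffun 'I_D -> 'I_(ρ + ρ).+1}) :
  'rV[int]_D := \row_j (Num.floor (w ord0 j) + (o j : nat)%:Z - ρ%:Z).

Lemma near_box_point r (w : 'rV[R]_D) z :
  dist (zr z) w <= r -> exists o, z = box_point (Num.truncn r).+1 w o.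
Proof.
move=> zw; set ρ := (Num.truncn r).+1.
exists [ffun j => inord (absz (z ord0 j - Num.floor (w ord0 j) + ρ%:Z))].
apply/rowP => j; rewrite !mxE ffunE.
have := le_trans (dist_coord_le _ _ j) zw; rewrite /zr mxE => /int_near_floor.
move: (z ord0 j) (Num.floor _) => a fl /andP[lo hi].
by rewrite inordK; [rewrite gez0_abs|]; lia.
Qed.

Lemma Bset_card_bounded (V : 'I_m -> 'rV[R]_D) (r : R) :
  exists K : nat, forall n (L : {fset 'rV[int]_D}),
    (#|` Bset r (dil n (conv V)) L| <= K)%N.
Proof.
set ρ := (Num.truncn r).+1.
pose code n (p : 'I_m * {ffun 'I_D -> 'I_(ρ + ρ).+1}) := box_point ρ (n%:R *: V p.1) p.2.
exists #|{: 'I_m * {ffun 'I_D -> 'I_(ρ + ρ).+1}}| => n L.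
apply: (@leq_trans #|` [fset code n p | p : 'I_m * {ffun 'I_D -> 'I_(ρ + ρ).+1}]%fset|).
  apply/fsubset_leq_card/fsubsetP => z; rewrite inE => /andP[_ /asboolP].
  case/near_vertex_dil_conv => i /near_box_point[o ->].
  by apply/imfsetP; exists (i, o).
by apply: leq_trans (leq_imfset_card _ _ _) _; rewrite cardE.
Qed.

End Polytope.

Lemma rV_int_no_2torsion D (x : 'rV[int]_D) : x + x = 0 -> x = 0.
Proof.
by move/rowP => xx; apply/rowP => j; have := xx j; rewrite !mxE; move: (x _ _) => a; lia.
Qed.

Lemma zrB (R : realType) D (a b : 'rV[int]_D) : zr (a - b) = zr a - zr b :> 'rV[R]_D.
Proof. by apply/matrixP => i j; rewrite !mxE rmorphB. Qed.

Lemma refl_lattice_sub (R : realType) D (S : set 'rV[R]_D) (L : {fset 'rV[int]_D}) k :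
  (forall z, z \in L <-> S (zr z)) ->
  ([fset z in L | `[< refl (zr k) S (zr z) >]] `<=` [fset z in L | k - z \in L])%fset.
Proof.
move=> LS; apply/fsubsetP => z; rewrite !inE => /andP[zL /asboolP[x Sx xz]].
by rewrite zL LS zrB -xz subKr.
Qed.

Theorem lemma9 (R : realType) (D : nat) (P : set 'rV[R]_D)
  (m : nat) (V : 'I_m -> 'rV[R]_D) (hP : P = conv V)
  (hvert : forall v, is_vertex P v -> exists z : 'rV[int]_D, v = zr z)
  (r : R) (hr : 0 < r) :
  exists2 c : R, 0 < c &
  forall (n : nat) (LnP : {fset 'rV[int]_D}),
    (forall z, z \in LnP <-> dil n P (zr z)) ->
  forall F : {fset 'rV[int]_D}, (F `<=` Bset r (dil n P) LnP)%fset ->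
  forall k : 'rV[int]_D, in_M r (msum (dil n P) (dil n P)) k ->
  let good := [fset S in fpowerset LnP | (S `&` Bset r (dil n P) LnP == F)%fset]%fset in
  let bad := [fset S in good | ~~ in_sumset S k]%fset in
  let N := #|` [fset z in LnP | `[< refl (zr k) (dil n P) (zr z) >]]%fset |%fset in
  (#|` bad |%fset%:R / #|` good |%fset%:R : R) <= c * powR (3 / 4) (N%:R / 2).
Proof.
subst P; have [K BK] := Bset_card_bounded V r.
exists ((4 / 3) ^+ K.+1); first by rewrite exprn_gt0 // divr_gt0.
move=> n L LE F FB k _; cbv zeta.
have BL : (Bset r (dil n (conv V)) L `<=` L)%fset.
  by apply/fsubsetP => z; rewrite inE => /andP[].
apply: le_trans (@sumset_missing_ratio _ _ _ _ k BL FB (@rV_int_no_2torsion D) R _ (BK n L)) _.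
rewrite ler_pM2l ?exprn_gt0 ?divr_gt0 //; apply: ger_powR; first by apply/andP; split; lra.
by rewrite ler_pM2r ?invr_gt0 // ler_nat fsubset_leq_card // refl_lattice_sub.
Qed.
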